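(* Let $(\Omega, \Sigma, \mu, S)$ be a dynamical system which is asymptotically stationary. Let $\Pi \subset \Sigma$ be a $\pi$-system such that $\sigma(\Pi) = \Sigma$ and $$\lim_{k \to \infty} \sup_{i \in \mathbb{N}} \left|\mu(S^{-i}A \cap S^{-k}S^{-i}B) - \mu(S^{-i}A)\,\mu(S^{-k}S^{-i}B)\right| = 0$$ for all $A, B \in \Pi$. Then this limit relation holds for all $A, B \in \Sigma$.
   Context: A dynamical system $(\Omega,\Sigma,\mu,S)$ consists of a probability space $(\Omega,\Sigma,\mu)$ and a measurable map $S:\Omega\to\Omega$; $S^k$ denotes the $k$-fold composition and $S^{-k}A=(S^k)^{-1}(A)$. It is asymptotically stationary (with stationary limit $\nu$) if $\nu(A)=\lim_{k\to\infty}\mu(S^{-k}A)$ exists for every $A\in\Sigma$. $\mathbb{N}=\{1,2,\dots\}$. $\sigma(\Pi)$ is the $\sigma$-algebra generated by $\Pi$. *)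

From HB Require Import structures.
From mathcomp Require Import all_boot all_order all_algebra.
From mathcomp Require Import all_classical all_reals all_analysis.
Set Implicit Arguments. Unset Strict Implicit. Unset Printing Implicit Defensive.
Import Order.TTheory GRing.Theory Num.Theory.

Local Open Scope classical_set_scope.
Local Open Scope ereal_scope.

Definition preiter (T : Type) (S : T -> T) (k : nat) (A : set T) : set T :=
  (iter k S) @^-1` A.

Definition asymptotically_stationary (d : measure_display) (T : measurableType d)
  (R : realType) (mu : probability T R) (S : T -> T) : Prop :=
  forall A, measurable A ->
    exists l : \bar R, (fun k => mu (preiter S k A)) @ \oo --> l.

Definition mixing_sup (d : measure_display) (T : measurableType d)
  (R : realType) (mu : probability T R) (S : T -> T) (A B : set T) (k : nat)
  : \bar R :=
  ereal_sup [set `| mu (preiter S i A `&` preiter S k (preiter S i B))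
                   - mu (preiter S i A) * mu (preiter S k (preiter S i B)) |
            | i in [set i : nat | (0 < i)%N]].

From HB Require Import structures.
From mathcomp Require Import all_boot all_order all_algebra.
From mathcomp Require Import all_classical all_reals all_analysis.
From mathcomp Require Import lra.
Import Order.TTheory GRing.Theory Num.Theory numFieldNormedType.Exports.
Set Implicit Arguments. Unset Strict Implicit. Unset Printing Implicit Defensive.
Local Open Scope classical_set_scope.
Local Open Scope ring_scope.

(* The hypothesis says that [cov (S^-i A) (S^-(i+k) B)] tends to 0 as k grows,
   uniformly in i.  For fixed A in Pi, the sets B with this property form a
   Dynkin system.  The only delicate point is a countable disjoint union, which
   needs the measures [mu \o S^-m] to be uniformly continuous from above at the
   empty set; this follows from their setwise convergence (asymptotic
   stationarity) by the gliding hump argument of the Nikodym convergence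
   theorem.  The pi-lambda theorem gives every measurable B, and a second Dynkin
   argument in A, the property being symmetric in A and B, every measurable A. *)

Section setwise_convergence.
Context d (T : measurableType d) (R : realType) (nu : nat -> set T -> R).
Hypothesis nuU : forall m X Y, measurable X -> measurable Y -> X `&` Y = set0 ->
  nu m (X `|` Y) = nu m X + nu m Y.
Hypothesis nu_le : forall m X Y, measurable X -> measurable Y -> X `<=` Y ->
  nu m X <= nu m Y.
Hypothesis nu_cvg : forall X, measurable X -> cvgn (nu ^~ X).

Lemma nu_cauchy X e : measurable X -> 0 < e -> exists M, forall m m',
  (M <= m)%N -> (M <= m')%N -> `|nu m X - nu m' X| < e.
Proof.
move=> mX e0; have e2 : 0 < e / 2 by rewrite divr_gt0.
have [M _ HM] := proj1 (cvgrPdist_lt _ _) (nu_cvg mX) _ e2.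
exists M => m m' Mm Mm'; have := HM _ Mm; have := HM _ Mm'.
rewrite !ltr_norml => /andP[? ?] /andP[? ?]; apply/andP; split; lra.
Qed.

Lemma nuDB m X Y : measurable X -> measurable Y -> Y `<=` X ->
  nu m (X `\` Y) = nu m X - nu m Y.
Proof.
move=> mX mY YX; rewrite -[in nu m X](setDKU YX) nuU ?addrK //.
- exact: measurableD.
- by rewrite setDE -setIA setICl setI0.
Qed.

Variable C : nat -> set T.
Hypothesis mC : forall n, measurable (C n).
Hypothesis C_nonincr : {homo C : n m / (n <= m)%N >-> m `<=` n}.
Hypothesis nu_C0 : forall m, nu m (C n) @[n --> \oo] --> 0.

Lemma nu_C_small m e : 0 < e -> \forall n \near \oo, nu m (C n) < e.
Proof.
move=> e0; apply: filterS (proj1 (cvgrPdist_lt _ _) (nu_C0 m) _ e0) => n.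
by rewrite sub0r normrN; apply: le_lt_trans; rewrite ler_norm.
Qed.

Lemma nu_C_small_before M e : 0 < e ->
  \forall n \near \oo, forall m, (m < M)%N -> nu m (C n) < e.
Proof.
move=> e0; elim: M => [|M IH]; first exact: nearW.
apply: filterS2 IH (nu_C_small M e0) => n IH CM m.
by rewrite ltnS leq_eqVlt => /predU1P[->//|]; exact: IH.
Qed.

Definition extends (s s' : set T * nat) :=
  [/\ s.1 `<=` s'.1, s'.1 `<=` s.1 `|` C s.2 & (s.2 <= s'.2)%N].

Lemma extends_refl s : extends s s.
Proof. by split=> //; exact: subsetUl. Qed.

Lemma extends_trans s2 s1 s3 : extends s1 s2 -> extends s2 s3 -> extends s1 s3.
Proof.
case=> P12 P21 n12 [P23 P32 n23]; split; first exact: subset_trans P23.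
- by move=> x /P32 [/P21//|/(C_nonincr n12)]; right.
- exact: leq_trans n23.
Qed.

(* If uniformity fails at level [e], each [hump_step] enlarges a set [P] by a
   piece [C n1 `\` C n3] of [nu m]-mass above [e / 2] but of [nu M]-mass below
   [e / 8], where [nu M P] and [nu m P] are within [e / 8]; the union [U] of all
   these pieces then has [nu m U - nu M U > e / 4] for arbitrarily late [m] and
   [M], contradicting the convergence of [nu _ U]. *)
Section gliding_hump.
Variable e : R.
Hypothesis e_gt0 : 0 < e.
Hypothesis no_uniform_bound : forall N M0, exists2 m, (M0 <= m)%N & e <= nu m (C N).

Definition hump_inv (s : set T * nat) := measurable s.1 /\ s.1 `&` C s.2 = set0.

Definition hump_gap m M (s : set T * nat) := forall U, measurable U ->
  s.1 `<=` U -> U `<=` s.1 `|` C s.2 -> e / 4 < nu m U - nu M U.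

Lemma hump_step M0 s : hump_inv s -> exists s', [/\ hump_inv s', extends s s' &
  exists m M, [/\ (M0 <= m)%N, (M0 <= M)%N & hump_gap m M s']].
Proof.
case: s => P n [/= mP PCn].
have e8 : 0 < e / 8 by rewrite divr_gt0.
have e2 : 0 < e / 2 by rewrite divr_gt0.
have [M HM] := nu_cauchy mP e8.
pose M1 := maxn M M0.
have [N1 _ HN1] := nu_C_small M1 e8.
pose n1 := maxn n N1.
have [m M1m Cn1_big] := no_uniform_bound n1 M1.
have [N3 _ HN3] := nu_C_small m e2.
pose n3 := maxn n1 N3.
have nn1 : (n <= n1)%N := leq_maxl _ _.
have n13 : (n1 <= n3)%N := leq_maxl _ _.
have PCn1 : P `&` C n1 = set0 := subsetI_eq0 (@subset_refl _ P) (C_nonincr nn1) PCn.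
pose D := C n1 `\` C n3.
have mD : measurable D by exact: measurableD.
have PD : P `&` D = set0 := subsetI_eq0 (@subset_refl _ P) (@subDsetl _ _ _) PCn1.
exists (P `|` D, n3); split.
- split=> /=; first exact: measurableU.
  rewrite setIUl setDKI setU0.
  exact: subsetI_eq0 (@subset_refl _ P) (C_nonincr (leq_trans nn1 n13)) PCn.
- split=> /=; [exact: subsetUl| |exact: leq_trans n13].
  by move=> x [?|[/(C_nonincr nn1) ? _]]; [left|right].
exists m, M1; split; [exact: leq_trans (leq_maxr _ _) M1m|exact: leq_maxr|].
move=> U mU /= PDU UPD.
have lo : nu m P + nu m D <= nu m U.
  by rewrite -nuU //; apply: nu_le PDU => //; exact: measurableU.
have hi : nu M1 U <= nu M1 P + nu M1 (C n1).
  rewrite -nuU //; apply: nu_le => //; first exact: measurableU.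
  by move=> x /UPD [[?|[? _]]|/(C_nonincr n13) ?]; [left|right|right].
have := nuDB m (mC n1) (mC n3) (C_nonincr n13).
have := HN3 n3 (leq_maxr _ _); have := HN1 n1 (leq_maxr _ _).
have := HM m M1 (leq_trans (leq_maxl _ _) M1m) (leq_maxl _ _).
rewrite ltr_norml => /andP[? ?] ? ? ?; rewrite -/D; lra.
Qed.

Lemma gliding_hump_contradiction : False.
Proof.
have /choice[f Hf] : forall ts : nat * (set T * nat), exists s', hump_inv ts.2 ->
    [/\ hump_inv s', extends ts.2 s' &
      exists m M, [/\ (ts.1 <= m)%N, (ts.1 <= M)%N & hump_gap m M s']].
  move=> [t s]; have [Is|nIs] := pselect (hump_inv s); last by exists s.
  by have [s' ?] := hump_step t Is; exists s'.
pose s := fix s t := if t is t'.+1 then f (t', s t') else (set0, 0%N).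
have Is t : hump_inv (s t).
  elim: t => [|t IH]; last by case: (Hf (t, s t) IH).
  by split; [exact: measurable0|exact: set0I].
have ext : {homo s : t t' / (t <= t')%N >-> extends t t'}.
  by apply: homo_leq extends_refl extends_trans _ => t; case: (Hf (t, s t) (Is t)).
pose U := \bigcup_t (s t).1.
have mU : measurable U by apply: bigcupT_measurable => t; case: (Is t).
have [K HK] := nu_cauchy mU (divr_gt0 e_gt0 (ltr0Sn _ 3)).
have [_ _ [m [M [Km KM gap]]]] := Hf (K, s K) (Is K).
have : e / 4 < nu m U - nu M U.
  apply: (gap U mU); first by move=> x ?; exists K.+1.
  move=> x [t _ sx]; have [tK|Kt] := leqP t K.+1.
    by left; case: (ext _ _ tK) => + _ _; apply.
  by case: (ext _ _ (ltnW Kt)) => _ + _; apply.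
by have := HK m M Km KM; rewrite ltr_norml => /andP[? ?] ?; lra.
Qed.

End gliding_hump.

Lemma nu_C_eventually_uniformly_small e : 0 < e ->
  exists N M0, forall m, (M0 <= m)%N -> nu m (C N) < e.
Proof.
move=> e0; apply: contrapT => small; apply: (gliding_hump_contradiction e0) => N M0.
apply: contrapT => big; apply: small; exists N, M0 => m M0m.
by rewrite ltNge; apply/negP => ?; apply: big; exists m.
Qed.

Lemma nu_C_uniformly_small e : 0 < e -> exists N, forall m, nu m (C N) < e.
Proof.
move=> e0; have [N1 [M0 HN1]] := nu_C_eventually_uniformly_small e0.
have [N2 _ HN2] := nu_C_small_before M0 e0.
exists (maxn N1 N2) => m; have [mM0|M0m] := ltnP m M0.
  exact: HN2 (leq_maxr _ _) _ mM0.
apply: le_lt_trans (HN1 _ M0m).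
by apply: nu_le => //; exact: C_nonincr (leq_maxl _ _).
Qed.

End setwise_convergence.

Section covariance.
Context d (T : measurableType d) (R : realType) (mu : probability T R).

Definition pr (A : set T) : R := fine (mu A).

Lemma prE A : measurable A -> mu A = (pr A)%:E.
Proof. by move=> mA; rewrite /pr fineK // fin_num_measure. Qed.

Lemma pr_ge0 A : 0 <= pr A.
Proof. by rewrite /pr fine_ge0. Qed.

Lemma pr_le1 A : measurable A -> pr A <= 1.
Proof. by move=> mA; rewrite -lee_fin -prE // probability_le1. Qed.

Lemma prT : pr setT = 1.
Proof. by rewrite /pr probability_setT. Qed.

Lemma prU A B : measurable A -> measurable B -> A `&` B = set0 ->
  pr (A `|` B) = pr A + pr B.
Proof.
move=> mA mB AB; apply/eqP; rewrite -eqe EFinD -!prE ?measureU //.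
exact: measurableU.
Qed.

Lemma pr_le A B : measurable A -> measurable B -> A `<=` B -> pr A <= pr B.
Proof. by move=> mA mB AB; rewrite -lee_fin -!prE // le_measure ?inE. Qed.

Definition cov (A B : set T) : R := pr (A `&` B) - pr A * pr B.

Lemma covC A B : cov A B = cov B A.
Proof. by rewrite /cov setIC mulrC. Qed.

Lemma covTr A : cov A setT = 0.
Proof. by rewrite /cov setIT prT mulr1 subrr. Qed.

Lemma covUr A B1 B2 : measurable A -> measurable B1 -> measurable B2 ->
  B1 `&` B2 = set0 -> cov A (B1 `|` B2) = cov A B1 + cov A B2.
Proof.
move=> mA mB1 mB2 B12; rewrite /cov setIUr !prU //; first lra.
- exact: measurableI.
- exact: measurableI.
- by rewrite setIACA B12 setI0.
Qed.

Lemma cov_setCr A B : measurable A -> measurable B -> cov A (~` B) = - cov A B.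
Proof.
move=> mA mB; have := covUr mA mB (measurableC mB) (setICr B).
by rewrite setUv covTr; lra.
Qed.

Lemma abs_cov_le A B : measurable A -> measurable B -> `|cov A B| <= pr B.
Proof.
move=> mA mB; rewrite /cov ler_norml.
have IB : pr (A `&` B) <= pr B by apply: pr_le => //; exact: measurableI.
have AB : pr A * pr B <= pr B by rewrite ler_piMl ?pr_ge0 ?pr_le1.
have := pr_ge0 (A `&` B); have := mulr_ge0 (pr_ge0 A) (pr_ge0 B).
by move=> ? ?; apply/andP; split; lra.
Qed.

Lemma abse_cov (X Y : set T) : measurable X -> measurable Y ->
  (`| mu (X `&` Y) - mu X * mu Y | = `|cov X Y|%:E)%E.
Proof.
move=> mX mY; rewrite (prE (measurableI _ _ mX mY)) (prE mX) (prE mY).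
by rewrite -EFinM -EFinB abse_EFin.
Qed.

End covariance.

Lemma preiterD (T : Type) (S : T -> T) i k A :
  preiter S k (preiter S i A) = preiter S (i + k) A.
Proof. by apply/seteqP; split=> x; rewrite /preiter /preimage /= iterD. Qed.

Section iterated_preimages.
Context d (T : measurableType d) (R : realType) (mu : probability T R) (S : T -> T).
Hypothesis mS : measurable_fun setT S.

Lemma measurable_preiter k A : measurable A -> measurable (preiter S k A).
Proof.
elim: k A => [//|k IH] A mA.
by apply: (IH (S @^-1` A)); rewrite -[_ @^-1` _]setTI; exact: mS.
Qed.

Lemma pr_preiterU m A B : measurable A -> measurable B -> A `&` B = set0 ->
  pr mu (preiter S m (A `|` B)) = pr mu (preiter S m A) + pr mu (preiter S m B).
Proof.
move=> mA mB AB; rewrite /preiter preimage_setU prU //; try exact: measurable_preiter.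
by rewrite -preimage_setI AB preimage_set0.
Qed.

Lemma pr_preiter_le m A B : measurable A -> measurable B -> A `<=` B ->
  pr mu (preiter S m A) <= pr mu (preiter S m B).
Proof.
by move=> mA mB AB; apply: pr_le; [exact: measurable_preiter..|move=> x /AB].
Qed.

Lemma pr_preiter_nonincr_cvg0 k (C : nat -> set T) :
  (forall n, measurable (C n)) -> {homo C : n m / (n <= m)%N >-> m `<=` n} ->
  \bigcap_n C n = set0 -> pr mu (preiter S k (C n)) @[n --> \oo] --> 0.
Proof.
move=> mC C_nonincr C0; have mCk n := measurable_preiter k (mC n).
have : mu (preiter S k (C n)) @[n --> \oo] --> mu (\bigcap_n preiter S k (C n)).
  apply: nonincreasing_cvg_mu => //.
  - by rewrite /= (prE mu (mCk 0%N)) ltry.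
  - exact: bigcapT_measurable.
  - by move=> a b ab; rewrite subsetEset; exact: preimage_subset (C_nonincr _ _ ab).
by rewrite /preiter -preimage_bigcap C0 preimage_set0 measure0 => /fine_cvgP[].
Qed.

Hypothesis hst : asymptotically_stationary mu S.

Lemma pr_preiter_cvg A : measurable A -> cvgn (fun m => pr mu (preiter S m A)).
Proof.
move=> mA; have [l hl] := hst mA; have mAm m := measurable_preiter m mA.
case: l hl => [r| |] hl.
- by apply/cvg_ex; exists r; move/fine_cvgP: hl => [].
- move/cvgeyPge: hl => /(_ 2%R) [N _ /(_ N (leqnn N))].
  by move/le_trans/(_ (probability_le1 mu (mAm N))); rewrite lee_fin; lra.
- move/cvgeNyPle: hl => /(_ (-1)%R) [N _ /(_ N (leqnn N))].
  by move/(le_trans (measure_ge0 mu _)); rewrite lee_fin; lra.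
Qed.

Lemma pr_preiter_uniformly_small (C : nat -> set T) e :
  (forall n, measurable (C n)) -> {homo C : n m / (n <= m)%N >-> m `<=` n} ->
  \bigcap_n C n = set0 -> 0 < e ->
  exists N, forall m, pr mu (preiter S m (C N)) < e.
Proof.
move=> mC C_nonincr C0.
apply: (@nu_C_uniformly_small _ _ _ (fun m A => pr mu (preiter S m A))) => //.
- exact: pr_preiterU.
- exact: pr_preiter_le.
- exact: pr_preiter_cvg.
- by move=> m; exact: pr_preiter_nonincr_cvg0.
Qed.

End iterated_preimages.

Section decorrelation.
Context d (T : measurableType d) (R : realType) (mu : probability T R) (S : T -> T).
Hypothesis mS : measurable_fun setT S.
Hypothesis hst : asymptotically_stationary mu S.
Variables (J : Type) (X : nat -> J -> set T) (lag : nat -> J -> nat).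
Hypothesis mX : forall k i, measurable (X k i).

Definition decorrelated (B : set T) := forall e, 0 < e -> exists K, forall k,
  (K <= k)%N -> forall i, `|cov mu (X k i) (preiter S (lag k i) B)| <= e.

Lemma decorrelated_setT : decorrelated setT.
Proof.
by move=> e e0; exists 0%N => k _ i; rewrite /preiter preimage_setT covTr normr0 ltW.
Qed.

Lemma decorrelated_setC B : measurable B -> decorrelated B -> decorrelated (~` B).
Proof.
move=> mB dB e e0; have [K HK] := dB e e0; exists K => k Kk i.
rewrite /preiter -preimage_setC cov_setCr ?normrN; [exact: HK|exact: mX|].
exact: measurable_preiter.
Qed.

Lemma decorrelated_setU B1 B2 : measurable B1 -> measurable B2 ->
  B1 `&` B2 = set0 -> decorrelated B1 -> decorrelated B2 ->
  decorrelated (B1 `|` B2).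
Proof.
move=> mB1 mB2 B12 dB1 dB2 e e0; have e2 : 0 < e / 2 by rewrite divr_gt0.
have [K1 HK1] := dB1 _ e2; have [K2 HK2] := dB2 _ e2.
exists (maxn K1 K2) => k; rewrite geq_max => /andP[k1 k2] i.
rewrite /preiter preimage_setU covUr //; try exact: measurable_preiter.
  have := HK1 k k1 i; have := HK2 k k2 i => h1 h2.
  by apply: le_trans (ler_normD _ _) _; lra.
by rewrite -preimage_setI B12 preimage_set0.
Qed.

Lemma decorrelated_bigcup (F : nat -> set T) : (forall n, measurable (F n)) ->
  trivIset setT F -> (forall n, decorrelated (F n)) -> decorrelated (\bigcup_n F n).
Proof.
move=> mF tF dF e e0; have e2 : 0 < e / 2 by rewrite divr_gt0.
pose G N := \big[setU/set0]_(k < N) F k.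
pose C N := \bigcup_k F (N + k)%N.
have mG N : measurable (G N) by apply: bigsetU_measurable.
have mC N : measurable (C N) by apply: bigcupT_measurable.
have dG N : decorrelated (G N).
  elim: N => [|N IH].
    by rewrite /G big_ord0 -setCT; exact: decorrelated_setC decorrelated_setT.
  rewrite /G big_ord_recr /=; apply: decorrelated_setU => //; first exact: mG.
  by apply: (@trivIset_bigsetUI _ predT) => //; rewrite /predT /= trueE.
have GC N : G N `&` C N = set0.
  rewrite setI_bigcupr; apply: bigcup0 => k _.
  by apply: (@trivIset_bigsetUI _ predT); rewrite ?leq_addr // /predT /= trueE.
have C_nonincr : {homo C : n m / (n <= m)%N >-> m `<=` n}.
  move=> n m nm x [k _ Fx]; exists (m - n + k)%N => //.
  by rewrite addnA subnKC.
have C0 : \bigcap_n C n = set0.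
  apply/seteqP; split=> x // Cx; have [k0 _ F0] := Cx 0%N I.
  have [k1 _ F1] := Cx k0.+1 I.
  have E : k0 = (k0.+1 + k1)%N by apply: tF => //; exists x.
  by have := leq_addr k1 k0.+1; rewrite -E ltnn.
have [N HN] := pr_preiter_uniformly_small mS hst mC C_nonincr C0 e2.
have [K HK] := dG N _ e2.
exists K => k Kk i; rewrite (bigcup_splitn N) -/(G N) -/(C N).
rewrite /preiter preimage_setU covUr //; try exact: measurable_preiter.
  have := HK k Kk i; have := HN (lag k i).
  have := abs_cov_le mu (mX k i) (measurable_preiter mS (lag k i) (mC N)).
  by rewrite /preiter => h1 h2 h3; apply: le_trans (ler_normD _ _) _; lra.
by rewrite -preimage_setI GC preimage_set0.
Qed.

Lemma decorrelated_measurable (Pi : set (set T)) : setI_closed Pi ->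
  measurable = <<s Pi >> -> (forall B, Pi B -> decorrelated B) ->
  forall B, measurable B -> decorrelated B.
Proof.
move=> Pi_setI Pi_gen Pi_dec B mB; apply: (dynkin_induction Pi_gen Pi_setI) => //.
- exact: decorrelated_setT.
- by move=> A mA; exact: decorrelated_setC.
- by move=> F mF tF; exact: decorrelated_bigcup.
- by rewrite -Pi_gen.
Qed.

End decorrelation.

Lemma decorrelated_preiterC d (T : measurableType d) (R : realType)
    (mu : probability T R) (S : T -> T) (J : Type) (a b : nat -> J -> nat) A B :
  decorrelated mu S (fun k i => preiter S (a k i) A) b B ->
  decorrelated mu S (fun k i => preiter S (b k i) B) a A.
Proof.
by move=> dB e e0; have [K HK] := dB e e0; exists K => k Kk i; rewrite covC; exact: HK.
Qed.

Section mixing.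
Context d (T : measurableType d) (R : realType) (mu : probability T R) (S : T -> T).
Hypothesis mS : measurable_fun setT S.
Variables A B : set T.
Hypotheses (mA : measurable A) (mB : measurable B).

Let mixing_term i k := `|cov mu (preiter S i.+1 A) (preiter S (i.+1 + k) B)|.

Lemma mixing_sup_le k e :
  (mixing_sup mu S A B k <= e%:E)%E <-> forall i, mixing_term i k <= e.
Proof.
have m_i i : measurable (preiter S i A) := measurable_preiter mS i mA.
have m_ik i : measurable (preiter S (i + k) B) := measurable_preiter mS (i + k) mB.
split=> [sup_le i | le_e].
- rewrite -lee_fin; apply: le_trans sup_le; apply: ereal_sup_ubound.
  by exists i.+1 => //; rewrite preiterD (abse_cov mu (m_i _) (m_ik _)).
- apply: ge_ereal_sup => _ [[|i] //= _ <-].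
  by rewrite preiterD (abse_cov mu (m_i _) (m_ik _)) lee_fin; exact: le_e.
Qed.

Lemma mixing_sup_ge0 k : (0 <= mixing_sup mu S A B k)%E.
Proof. by apply: le_trans (abse_ge0 _) (ereal_sup_ubound _); exists 1%N. Qed.

Lemma mixing_sup_cvg0P : mixing_sup mu S A B k @[k --> \oo] --> 0%E <->
  decorrelated mu S (fun _ i => preiter S i.+1 A) (fun k i => (i.+1 + k)%N) B.
Proof.
have fin k e : (mixing_sup mu S A B k <= e%:E)%E -> mixing_sup mu S A B k \is a fin_num.
  by move=> le_e; rewrite ge0_fin_numE ?mixing_sup_ge0 // (le_lt_trans le_e) ?ltry.
split=> [/fine_cvgP[[N1 _ finN1] /cvgrPdist_le cvg0] e e0 | dec].
  have [N2 _ HN2] := cvg0 e e0; exists (maxn N1 N2) => k.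
  rewrite geq_max => /andP[k1 k2]; apply/mixing_sup_le.
  rewrite -(fineK (finN1 k k1)) lee_fin; apply: le_trans (ler_norm _) _.
  by have := HN2 k k2; rewrite /= sub0r normrN.
apply/fine_cvgP; split.
  by have [K HK] := dec 1 ltr01; exists K => // k /HK /mixing_sup_le /fin.
apply/cvgrPdist_le => e e0; have [K HK] := dec e e0.
exists K => // k /HK /mixing_sup_le le_e.
rewrite /= sub0r normrN ger0_norm ?fine_ge0 ?mixing_sup_ge0 //.
by rewrite -lee_fin fineK ?(fin _ _ le_e).
Qed.

End mixing.

Local Open Scope ereal_scope.

Theorem lemma2p2 (d : measure_display) (T : measurableType d) (R : realType)
  (mu : probability T R) (S : T -> T) (Pi : set (set T)) :
  measurable_fun setT S ->
  asymptotically_stationary mu S ->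
  setI_closed Pi ->
  (@measurable d T) = <<s Pi >> ->
  (forall A B, Pi A -> Pi B -> mixing_sup mu S A B k @[k --> \oo] --> 0) ->
  forall A B, measurable A -> measurable B ->
    mixing_sup mu S A B k @[k --> \oo] --> 0.
Proof.
move=> mS hst Pi_setI Pi_gen Pi_mix A B mA mB.
have mPi Z : Pi Z -> measurable Z by rewrite Pi_gen; exact: sub_gen_smallest.
have Pi_decB A0 : Pi A0 -> decorrelated mu S
    (fun _ i => preiter S i.+1 A0) (fun k i => (i.+1 + k)%N) B.
  move=> PA0; apply: (decorrelated_measurable mS hst _ Pi_setI Pi_gen) => // [k i|B0 PB0].
    exact: measurable_preiter (mPi _ PA0).
  by apply/mixing_sup_cvg0P => //; [exact: mPi|exact: mPi|exact: Pi_mix].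
apply/(mixing_sup_cvg0P mu mS mA mB)/decorrelated_preiterC.
apply: (decorrelated_measurable mS hst _ Pi_setI Pi_gen) => // [k i|A0 PA0].
  exact: measurable_preiter.
exact/decorrelated_preiterC/Pi_decB.
Qed.
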